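(* Let $K=K_1\times\cdots\times K_n$ be a product of CM fields, let $\alpha=(\alpha_1,\dots,\alpha_n)\in K$, and let $g_i\in\mathbb{Z}[x]$ be the minimal polynomial of $\alpha_i+\overline{\alpha}_i$. Then $\alpha$ is a Weil generator for $K$ if and only if (i) each $\alpha_i$ is a Weil generator for $K_i$, (ii) $\alpha_1\overline{\alpha}_1=\cdots=\alpha_n\overline{\alpha}_n$, and (iii) $|\operatorname{Res}(g_i,g_j)|=1$ for all $i\neq j$.
   Context: For a product of CM fields $K=K_1\times\cdots\times K_n$ (with componentwise CM involution $\overline{\cdot}$), an element $\alpha\in K$ is a Weil generator for $K$ if $\alpha\overline{\alpha}$ lies in the image of the diagonal embedding $\mathbb{Z}\to K$ and $\mathbb{Z}[\alpha,\overline{\alpha}]=\mathcal{O}_K:=\prod_i\mathcal{O}_{K_i}$. $\operatorname{Res}$ denotes the resultant. *)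

From HB Require Import structures.
From mathcomp Require Import all_boot all_order all_algebra all_field.
Set Implicit Arguments. Unset Strict Implicit. Unset Printing Implicit Defensive.
Import Order.TTheory GRing.Theory Num.Theory.
Local Open Scope ring_scope.

Definition totally_real (K : fieldExtType rat) (F : {subfield K}) : Prop :=
  forall (s : {rmorphism K -> algC}) (x : K), x \in F -> s x \is Num.real.

Definition totally_imaginary (K : fieldExtType rat) : Prop :=
  forall s : {rmorphism K -> algC}, exists x : K, s x \isn't Num.real.

(* K is a CM field with CM involution c: K is a totally imaginary quadratic
   extension of a totally real subfield F, and c is the nontrivial
   automorphism of K over F (unique, since [K:F] = 2). *)
Definition CM_field (K : fieldExtType rat) (c : {rmorphism K -> K}) : Prop :=
  exists F : {subfield K},
    [/\ \dim {:K} = (2 * \dim F)%N, totally_real F, totally_imaginary K,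
        (forall x, x \in F -> c x = x) & exists x, c x != x].

Definition integral (K : fieldExtType rat) (x : K) : Prop :=
  exists p : {poly int}, p \is monic /\ root (map_poly intr p) x.

Definition eval2 (R : nzRingType) (P : {poly {poly int}}) (x y : R) : R :=
  \sum_(i < size P) \sum_(j < size P`_i) (P`_i`_j)%:~R * x ^+ i * y ^+ j.

Definition weil_gen (K : fieldExtType rat) (c : {rmorphism K -> K}) (a : K) : Prop :=
  (exists m : int, a * c a = m%:~R) /\
  (forall b : K, integral b <-> exists P : {poly {poly int}}, b = eval2 P a (c a)).

(* Weil generator for the product K = K_0 x ... x K_{n-1}, operations
   componentwise; O_K = prod O_{K_i}; Z[a, conj a] = { P(a, conj a) }. *)
Definition weil_gen_prod (n : nat) (K : 'I_n -> fieldExtType rat)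
    (c : forall i, {rmorphism K i -> K i}) (a : forall i, K i) : Prop :=
  (exists m : int, forall i, a i * c i (a i) = m%:~R) /\
  (forall b : forall i, K i, (forall i, integral (b i)) <->
     exists P : {poly {poly int}}, forall i, b i = eval2 P (a i) (c i (a i))).

(* g is the minimal polynomial of x in Z[x]: the primitive integer polynomial
   with positive leading coefficient proportional to the minimal polynomial
   of x over Q. *)
Definition int_minpoly (K : fieldExtType rat) (x : K) (g : {poly int}) : Prop :=
  zcontents g = 1 /\ map_poly intr g = (lead_coef g)%:~R *: minPoly 1%AS x.

From HB Require Import structures.
From mathcomp Require Import all_boot all_order all_algebra all_field.
From mathcomp Require Import ring zify.
Import Order.TTheory GRing.Theory Num.Theory.
Local Open Scope ring_scope.
Set Implicit Arguments. Unset Strict Implicit. Unset Printing Implicit Defensive.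

(* Write pi_k = a_k + conj a_k and g_k for the integer minimal polynomial of
   pi_k.  The proof hinges on the idempotents e_i = (0,..,1,..,0) of O_K:
   - if a is a Weil generator, every element of Z[a, conj a] has the shape
     A(pi) + B(pi) a with A, B in Z[X] (because a conj a = m is an integer);
     e_i is fixed by conjugation, which forces B(pi) = 0, so e_i = A(pi) with
     g_j | A for j <> i and g_i | 1 - A.  A Bezout relation u g_i + v g_j = 1
     between monic integer polynomials makes their resultant a unit of Z
     (reduce modulo any prime dividing it);
   - conversely, Res(g_i,g_j) = u g_i + v g_j in Z[X] and |Res| = 1 give
     e_i = prod_(j <> i) Res(g_i,g_j) v g_j evaluated at pi, and then any
     integral b = (P_k(a_k, conj a_k))_k equals sum_i e_i P_i(a, conj a). *)

Definition zeval (R : comNzRingType) (z : R) : {rmorphism {poly int} -> R} :=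
  (horner_eval z \o map_poly intr)%FUN.

(* Evaluation of P(X, Y) at (x, y); the outer variable is X. *)
Definition zeval2 (R : comNzRingType) (x y : R) :
    {rmorphism {poly {poly int}} -> R} :=
  (horner_eval x \o map_poly (zeval y))%FUN.

Definition at_sum (h : {poly int}) : {poly {poly int}} :=
  (map_poly (fun c : int => c%:P%:P) h).[ 'X + ('X)%:P ].

Section Evaluation.
Variable R : comNzRingType.
Implicit Types (x y z : R) (A : {poly int}) (P : {poly {poly int}}).

Lemma zevalE z A : zeval z A = (map_poly intr A).[z].
Proof. by rewrite /= horner_evalE. Qed.

Lemma zevalX z : zeval z 'X = z.
Proof. by rewrite zevalE map_polyX hornerX. Qed.

Lemma zevalC z (d : int) : zeval z d%:P = d%:~R.
Proof. by rewrite zevalE map_polyC hornerC. Qed.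

Lemma zeval2X x y : zeval2 x y 'X = x.
Proof. by rewrite /= map_polyX horner_evalE hornerX. Qed.

Lemma zeval2Y x y : zeval2 x y ('X)%:P = y.
Proof. by rewrite /= map_polyC horner_evalE hornerC -[RHS](zevalX y). Qed.

Lemma zeval2C x y (d : int) : zeval2 x y d%:P%:P = d%:~R.
Proof. by rewrite /= map_polyC horner_evalE hornerC -[RHS](zevalC y). Qed.

Lemma eval2E P x y : eval2 P x y = zeval2 x y P.
Proof.
rewrite /eval2 /= horner_evalE (horner_coef_wide _ (size_poly _ _)).
apply: eq_bigr => i _; rewrite coef_map /= horner_evalE.
rewrite (horner_coef_wide _ (size_poly _ _)) mulr_suml.
by apply: eq_bigr => j _; rewrite coef_map /= mulrAC.
Qed.

Lemma zeval2_at_sum x y h : zeval2 x y (at_sum h) = zeval (x + y) h.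
Proof.
rewrite /at_sum -horner_map rmorphD zeval2X zeval2Y zevalE.
congr (_.[_]); rewrite -map_poly_comp; apply: eq_map_poly => d /=.
exact: zeval2C.
Qed.

Lemma zeval_morph (S : comNzRingType) (f : {rmorphism R -> S}) z A :
  f (zeval z A) = zeval (f z) A.
Proof.
rewrite !zevalE -horner_map -map_poly_comp; congr (_.[_]).
by apply: eq_map_poly => d /=; rewrite rmorph_int.
Qed.

Lemma eval2_morph (S : comNzRingType) (f : {rmorphism R -> S}) P x y :
  f (eval2 P x y) = eval2 P (f x) (f y).
Proof.
rewrite /eval2 rmorph_sum; apply: eq_bigr => i _; rewrite rmorph_sum.
by apply: eq_bigr => j _; rewrite !rmorphM rmorph_int !rmorphXn.
Qed.

End Evaluation.

(* P(X, Y) reduces modulo XY = m to A(X + Y) + B(X + Y) X, uniformly in every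
   commutative ring: this is how Z[a, conj a] is seen as Z[pi] + Z[pi] a. *)
Definition reduces_mod (m : int) (P : {poly {poly int}}) : Prop :=
  exists A B : {poly int}, forall (R : comNzRingType) (x y : R),
    x * y = m%:~R -> zeval2 x y P = zeval (x + y) A + zeval (x + y) B * x.

Section ReductionModNorm.
Variable m : int.

Lemma reduces_const (d : int) : reduces_mod m d%:P%:P.
Proof. by exists d%:P, 0 => R x y _; rewrite zeval2C zevalC rmorph0 mul0r addr0. Qed.

Lemma reduces_X : reduces_mod m 'X.
Proof. by exists 0, 1 => R x y _; rewrite zeval2X rmorph0 rmorph1 add0r mul1r. Qed.

Lemma reduces_Y : reduces_mod m ('X)%:P.
Proof.
by exists 'X, (-1) => R x y _; rewrite zeval2Y zevalX rmorphN rmorph1; ring.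
Qed.

Lemma reduces_add P Q : reduces_mod m P -> reduces_mod m Q -> reduces_mod m (P + Q).
Proof.
move=> [A1 [B1 hP]] [A2 [B2 hQ]]; exists (A1 + A2), (B1 + B2) => R x y hxy.
by rewrite !rmorphD hP // hQ //; ring.
Qed.

(* Uses x^2 = (x + y) x - m. *)
Lemma reduces_mul P Q : reduces_mod m P -> reduces_mod m Q -> reduces_mod m (P * Q).
Proof.
move=> [A1 [B1 hP]] [A2 [B2 hQ]].
exists (A1 * A2 - m%:P * B1 * B2), (A1 * B2 + A2 * B1 + 'X * B1 * B2).
move=> R x y hxy; rewrite rmorphM hP // hQ //.
by rewrite !rmorphD rmorphN !rmorphM zevalC zevalX -hxy; ring.
Qed.

Lemma reduces_all P : reduces_mod m P.
Proof.
elim/poly_ind: P => [|Q p IHQ]; first by have := reduces_const 0; rewrite !polyC0.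
apply: reduces_add; first exact: reduces_mul IHQ reduces_X.
elim/poly_ind: p => [|q d IHq]; first by have := reduces_const 0; rewrite !polyC0.
by rewrite polyCD polyCM; apply: reduces_add (reduces_mul IHq reduces_Y) _;
  apply: reduces_const.
Qed.

End ReductionModNorm.

Section Integrality.
Variable K : fieldExtType rat.
Implicit Types (x : K) (p q : {poly int}).

Lemma integral_int (z : int) : integral (z%:~R : K).
Proof.
exists ('X - z%:P); split; first exact: monicXsubC.
by rewrite rmorphB /= map_polyX map_polyC root_XsubC.
Qed.

Lemma intr_K (z : int) : in_alg K z%:~R = z%:~R.
Proof. exact: rmorph_int. Qed.

Lemma intrK_inj : injective (intr : int -> K).
Proof. by move=> u v; rewrite -!intr_K => /fmorph_inj/intr_inj. Qed.

Lemma intrK_eq0 (z : int) : ((z%:~R : K) == 0) = (z == 0).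
Proof. by rewrite -intr_K fmorph_eq0 intr_eq0. Qed.

Lemma map_intr_rat p : map_poly (intr : int -> K) p = map_poly (in_alg K) (map_poly intr p).
Proof. by rewrite -map_poly_comp; apply: eq_map_poly => z; exact: (esym (intr_K z)). Qed.

Lemma polyOver_intr p : map_poly (intr : int -> K) p \is a polyOver 1%VS.
Proof. by apply/polyOver1P; exists (map_poly intr p); rewrite map_intr_rat. Qed.

Lemma size_map_intr p : size (map_poly (intr : int -> K) p) = size p.
Proof. by apply: size_map_inj_poly; [exact: intrK_inj | exact: mulr0z]. Qed.

(* If x is a root of q in Z[X], then L x is an algebraic integer, where
   L = lead_coef q: it is a root of the monic L^(deg q - 1) q(X / L). *)
Lemma lead_coef_root_integral q x :
  q != 0 -> root (map_poly intr q) x -> integral ((lead_coef q)%:~R * x).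
Proof.
move=> q0 hr; set L := lead_coef q.
have [d szq] : exists d, size q = d.+2.
  have qK0 : map_poly (intr : int -> K) q != 0 by rewrite -size_poly_eq0 size_map_intr size_poly_eq0.
  by move: (root_size_gt1 qK0 hr); rewrite size_map_intr; case: (size q) => [|[|d]] //; exists d.
have qL : q`_d.+1 = L by rewrite /L lead_coefE szq.
pose r := \poly_(i < d.+2) (if i == d.+1 then 1 else q`_i * L ^+ (d - i)).
exists r; split; first by rewrite monicE /r lead_coef_poly //= eqxx.
have szr : (size (map_poly (intr : int -> K) r) <= d.+2)%N.
  exact: leq_trans (size_poly _ _) (size_poly _ _).
have szq' : (size (map_poly (intr : int -> K) q) <= d.+2)%N by rewrite size_map_intr szq.
move: hr; rewrite /root (horner_coef_wide _ szr) (horner_coef_wide _ szq') => /eqP hr.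
apply/eqP; transitivity ((L%:~R : K) ^+ d * \sum_(i < d.+2) (map_poly intr q)`_i * x ^+ i);
  last by rewrite hr mulr0.
rewrite mulr_sumr; apply: eq_bigr => i _; rewrite !coef_map /= coef_poly ltn_ord.
case: eqP => [->|ne]; first by rewrite qL exprMn rmorph1 mul1r exprSr; ring.
have le_id : (i <= d)%N by move: (ltn_ord i) ne; rewrite ltnS leq_eqVlt => /orP[/eqP->|].
have splitL : (L%:~R : K) ^+ d = L%:~R ^+ (d - i) * L%:~R ^+ i by rewrite -exprD subnK.
by rewrite rmorphM rmorphXn exprMn splitL; ring.
Qed.

Lemma integral_multiple x : exists2 d : int, d != 0 & integral (d%:~R * x).
Proof.
have /polyOver1P [q0 hq0] := minPolyOver 1%AS x.
have [q [s s0 hq]] := rat_poly_scale q0.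
have q0n : q0 != 0.
  by apply/eqP => e; move: (monic_neq0 (monic_minPoly 1%AS x)); rewrite hq0 e map_poly0 eqxx.
have hq' : map_poly intr q = s%:~R *: q0 by rewrite hq scalerA mulfV ?scale1r // intr_eq0.
have qn : q != 0.
  apply/eqP => e; move: hq'; rewrite e map_poly0 => /esym/eqP.
  by rewrite scaler_eq0 intr_eq0 (negPf s0) (negPf q0n).
exists (lead_coef q); first by rewrite lead_coef_eq0.
apply: lead_coef_root_integral => //.
rewrite map_intr_rat hq' map_polyZ rootZ -?hq0 ?root_minPoly //.
by rewrite fmorph_eq0 intr_eq0.
Qed.
End Integrality.

Section IntegerMinimalPolynomial.
Variables (K : fieldExtType rat) (x : K) (g : {poly int}).
Hypothesis hg : int_minpoly x g.

Lemma int_minpoly_neq0 : g != 0.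
Proof. by case: hg => hc _; apply/eqP => g0; move: hc; rewrite g0 zcontents0. Qed.

Lemma int_minpoly_root : zeval x g = 0.
Proof.
case: hg => _ hm; rewrite zevalE hm hornerZ.
by have /rootP -> := root_minPoly 1%AS x; rewrite mulr0.
Qed.

Lemma int_minpoly_size : (1 < size g)%N.
Proof.
rewrite -(size_map_intr K); apply: (root_size_gt1 (a := x)).
  by rewrite -size_poly_eq0 size_map_intr size_poly_eq0 int_minpoly_neq0.
by rewrite /root -zevalE int_minpoly_root.
Qed.

(* The minimal polynomial of an algebraic integer is monic: g divides a monic
   integer polynomial in Q[X], hence in Z[X] by Gauss's lemma, so its positive
   leading coefficient divides 1. *)
Lemma int_minpoly_monic : integral x -> g \is monic.
Proof.
move=> [p [pm hr]]; have [hz hm] := hg.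
have dvd_pK : (map_poly intr g) %| (map_poly intr p : {poly K}).
  by rewrite hm dvdpZl ?intrK_eq0 ?lead_coef_eq0 ?int_minpoly_neq0 // minPoly_dvdp ?polyOver_intr.
rewrite !map_intr_rat dvdp_map dvdp_rat_int in dvd_pK.
have [r hp] := dvdpP_int dvd_pK.
rewrite -[zprimitive g]scale1r -hz -zpolyEprim in hp.
have lc_pos : 0 < lead_coef g.
  by have := sgz_contents g; rewrite hz => /esym/eqP; rewrite sgz_cp0.
move: pm; rewrite !monicE hp lead_coefM => /eqP lc1; apply/eqP.
have rc_pos : 0 < lead_coef r by rewrite -(pmulr_rgt0 _ lc_pos) lc1.
by move: (lead_coef g) (lead_coef r) lc_pos rc_pos lc1 => u v; nia.
Qed.

Lemma int_minpoly_dvd h : g \is monic -> zeval x h = 0 -> exists q, h = q * g.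
Proof.
move=> gm hx; exists (h %/ g).
have hdiv := Pdiv.IdomainMonic.divp_eq gm h; set r := h %% g in hdiv.
suff r0 : r = 0 by rewrite {1}hdiv r0 addr0.
have rx : root (map_poly intr r) x.
  by move: hx; rewrite /root -zevalE hdiv rmorphD rmorphM int_minpoly_root mulr0 add0r => ->.
have hmin : minPoly 1%AS x = map_poly intr g by case: hg => _ ->; rewrite (eqP gm) scale1r.
apply/eqP; apply: contraT => rn0.
have rK0 : map_poly (intr : int -> K) r != 0 by rewrite -size_poly_eq0 size_map_intr size_poly_eq0.
have := dvdp_leq rK0 (minPoly_dvdp (polyOver_intr _ r) rx).
by rewrite hmin !size_map_intr leqNgt /r ltn_modpN0 // monic_neq0.
Qed.
End IntegerMinimalPolynomial.

Lemma resultant_map (aR rR : nzRingType) (f : {rmorphism aR -> rR}) (p q : {poly aR}) :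
    f (lead_coef p) != 0 -> f (lead_coef q) != 0 ->
  f (resultant p q) = resultant (map_poly f p) (map_poly f q).
Proof.
move=> nz_fp nz_fq; rewrite /resultant /Sylvester_mx !size_map_poly_id0 //.
rewrite -det_map_mx /= map_col_mx; congr (\det (col_mx _ _));
  by apply: map_lin1_mx => v; rewrite map_poly_rV rmorphM /= map_rVpoly.
Qed.

Section ResultantUnit.
Variables f h u v : {poly int}.
Hypotheses (fm : f \is monic) (hm : h \is monic) (bezout : u * f + v * h = 1).

(* Modulo any prime p, the reductions of f and h stay coprime, so their
   resultant does not vanish in F_p. *)
Lemma resultant_Fp_neq0 p : prime p -> (resultant f h)%:~R != 0 :> 'F_p.
Proof.
move=> pp; rewrite (@resultant_map _ _ (intr : int -> 'F_p)) ?(eqP fm) ?(eqP hm) ?rmorph1 ?oner_neq0 //.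
have : coprimep (map_poly (intr : int -> 'F_p) f) (map_poly intr h).
  apply/(@Bezout_coprimepP 'F_p); exists (map_poly intr u, map_poly intr v) => /=.
  by rewrite -!rmorphM -rmorphD bezout rmorph1 eqpxx.
by rewrite resultant_eq0 coprimep_def => /eqP ->.
Qed.

(* Hence no prime divides Res(f, h): it is a unit of Z. *)
Lemma resultant_unit_of_Bezout : `|resultant f h| = 1.
Proof.
set z := resultant f h; suff /eqP z1 : (`|z|%N == 1)%N by rewrite -abszE z1.
apply: contraT => n1.
have [p pp pdz] : exists2 p, prime p & (p %| `|z|%N)%N.
  case: (posnP `|z|%N) => [->|zpos]; first by exists 2%N.
  by have [|q] := @pdivP `|z|%N; [rewrite ltn_neqAle eq_sym n1 zpos | exists q].
have := resultant_Fp_neq0 pp; rewrite -/z [z]intEsign rmorphM mulf_eq0 negb_or => /andP[_].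
by have [k ->] := dvdnP pdz; rewrite /= -pmulrn natrM pchar_Fp_0 ?mulr0 ?eqxx.
Qed.
End ResultantUnit.

(* A CM field has an algebraic integer not fixed by its involution: scale any
   non-fixed element by an integer to make it integral. *)
Lemma CM_nonfixed_integral (K : fieldExtType rat) (c : {rmorphism K -> K}) :
  CM_field c -> exists2 z : K, integral z & c z != z.
Proof.
move=> [F [_ _ _ _ [x hx]]]; have [d d0 hd] := integral_multiple x.
exists (d%:~R * x) => //; rewrite rmorphM rmorph_int.
apply: contra hx => /eqP h.
have : d%:~R * (c x - x) = 0 by rewrite mulrBr h subrr.
by move/eqP; rewrite mulf_eq0 intrK_eq0 (negPf d0) subr_eq0.
Qed.

Section Conjugation.
Variables (K : fieldType) (c : {rmorphism K -> K}) (x : K) (m : int).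
Hypotheses (hm : x * c x = m%:~R) (hx : x != c x).

Lemma conj_involutive : c (c x) = x.
Proof.
have cx0 : c x != 0.
  apply: contra hx => /eqP cx0; apply/eqP; rewrite cx0.
  by apply: (fmorph_inj c); rewrite cx0 rmorph0.
by apply: (mulfI cx0); rewrite -rmorphM hm rmorph_int -hm mulrC.
Qed.

Lemma conj_fixes_trace : c (x + c x) = x + c x.
Proof. by rewrite rmorphD conj_involutive addrC. Qed.

(* In the decomposition A(pi) + B(pi) x, an element fixed by conjugation has
   B(pi) = 0, since conjugation only replaces x by conj(x). *)
Lemma conj_fixed_coeff (A B : {poly int}) (y : K) :
  y = zeval (x + c x) A + zeval (x + c x) B * x -> c y = y -> zeval (x + c x) B = 0.
Proof.
move=> ->; rewrite rmorphD rmorphM !zeval_morph conj_fixes_trace => /addrI /eqP.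
by rewrite -subr_eq0 -mulrBr mulf_eq0 subr_eq0 [c x == x]eq_sym (negPf hx) orbF => /eqP.
Qed.
End Conjugation.

Section ProductOfCMFields.
Variables (n : nat) (K : 'I_n -> fieldExtType rat).
Variables (c : forall i, {rmorphism K i -> K i}) (a : forall i, K i).

Local Notation pi k := (a k + c k (a k)).

(* single b is the element of the product with b : K i in position i and 0
   elsewhere; single 1 is the i-th idempotent of the product. *)
Definition single (i : 'I_n) (b : K i) : forall k, K k :=
  fun k => match k =P i with
           | ReflectT e => ecast z (K z) (esym e) b
           | ReflectF _ => 0 end.

Lemma single_id i (b : K i) : single b i = b.
Proof. by rewrite /single; case: eqP => // e; rewrite (eq_axiomK e). Qed.

Lemma single_ne i (b : K i) k : k != i -> single b k = 0.
Proof. by rewrite /single; case: eqP => // ->; rewrite eqxx. Qed.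

Lemma single1 i k : single (1 : K i) k = (k == i)%:R.
Proof. by case: (eqVneq k i) => [->|ne]; [rewrite single_id | rewrite single_ne]. Qed.

Lemma single_integral i (b : K i) : integral b -> forall k, integral (single b k).
Proof.
move=> hb k; case: (eqVneq k i) => [->|ne]; first by rewrite single_id.
by rewrite single_ne //; have := integral_int (K k) 0; rewrite mulr0z.
Qed.

Definition trace_idempotents : Prop :=
  forall i, exists A : {poly int}, forall k, zeval (pi k) A = (k == i)%:R.

(* Condition (i): project onto the i-th factor, using single to lift. *)
Lemma weil_prod_component : weil_gen_prod c a -> forall i, weil_gen (c i) (a i).
Proof.
move=> [[m hm] hiff] i; split; first by exists m.
move=> b; split => [hb | [P ->]].
  have [P hP] := proj1 (hiff (single b)) (single_integral hb).
  by exists P; rewrite -hP single_id.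
by apply: (proj2 (hiff (fun k => eval2 P (a k) (c k (a k))))); exists P.
Qed.

(* pi = X + Y evaluated at (a, conj a) lies in Z[a, conj a], hence in O_K. *)
Lemma weil_prod_trace_integral : weil_gen_prod c a -> forall k, integral (pi k).
Proof.
move=> [_ hiff] k; have pi_gen k' : pi k' = eval2 ('X + ('X)%:P) (a k') (c k' (a k')).
  by rewrite eval2E rmorphD zeval2X zeval2Y.
by rewrite pi_gen; move: k; apply/(proj2 (hiff _)); exists ('X + ('X)%:P).
Qed.

(* Each a_k is non-fixed: otherwise the integral non-fixed element of K_k
   given by the CM structure could not lie in Z[a, conj a]. *)
Lemma weil_prod_nonfixed :
  (forall i, CM_field (c i)) -> weil_gen_prod c a -> forall k, a k != c k (a k).
Proof.
move=> hCM [_ hiff] k; have [z zi zc] := CM_nonfixed_integral (hCM k).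
have [P hP] := proj1 (hiff (single z)) (single_integral zi).
move: zc; rewrite -(single_id z) hP eval2_morph; apply: contraNneq => fixed.
by rewrite -!fixed.
Qed.

(* Forward direction of the idempotent criterion: e_i lies in Z[a, conj a],
   hence is A(pi) + B(pi) a; being fixed by conjugation, it is A(pi). *)
Lemma weil_prod_idempotents :
  (forall i, CM_field (c i)) -> weil_gen_prod c a -> trace_idempotents.
Proof.
move=> hCM W i; have [[m hm] hiff] := W.
have [P hP] := proj1 (hiff (single (1 : K i))) (single_integral (integral_int (K i) 1)).
have [A [B hAB]] := reduces_all m P.
exists A => k.
have ek : (k == i)%:R = zeval (pi k) A + zeval (pi k) B * a k.
  by rewrite -single1 hP eval2E (hAB _ _ _ (hm k)).
have B0 : zeval (pi k) B = 0.
  exact: (conj_fixed_coeff (hm k) (weil_prod_nonfixed hCM W k) ek (rmorph_nat _ _)).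
by rewrite ek B0 mul0r addr0.
Qed.

Variable g : 'I_n -> {poly int}.
Hypothesis hg : forall i, int_minpoly (pi i) (g i).

(* If A(pi_i) = 1 and A(pi_j) = 0 then g_j | A and g_i | 1 - A, a Bezout
   relation between g_i and g_j. *)
Lemma idempotents_resultant :
    (forall i, g i \is monic) -> trace_idempotents ->
  forall i j, i != j -> `|resultant (g i) (g j)| = 1.
Proof.
move=> gm he i j ij; have [A hA] := he i.
have [q1 h1] : exists q, A = q * g j.
  by apply: (int_minpoly_dvd (hg j) (gm j)); rewrite hA eq_sym (negPf ij).
have [q2 h2] : exists q, 1 - A = q * g i.
  by apply: (int_minpoly_dvd (hg i) (gm i)); rewrite rmorphB rmorph1 hA eqxx subrr.
by apply: (@resultant_unit_of_Bezout _ _ q2 q1) => //; rewrite -h1 -h2 subrK.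
Qed.

(* Conversely, Res(g_i, g_j) = u g_i + v g_j with Res(g_i, g_j)^2 = 1 makes
   e_i = prod_(j <> i) Res(g_i, g_j) v g_j an idempotent polynomial. *)
Lemma resultant_idempotents :
  (forall i j, i != j -> `|resultant (g i) (g j)| = 1) -> trace_idempotents.
Proof.
move=> hR i; pose r j := resultant (g i) (g j).
pose uv j := s2val (resultant_in_ideal (int_minpoly_size (hg i)) (int_minpoly_size (hg j))).
have huv j : (r j)%:P = (uv j).1 * g i + (uv j).2 * g j.
  exact: (s2valP' (resultant_in_ideal (int_minpoly_size (hg i)) (int_minpoly_size (hg j)))).
exists (\prod_(j < n | j != i) ((r j)%:P * ((uv j).2 * g j))) => k.
rewrite rmorph_prod; case: (eqVneq k i) => [->|ki]; last first.
  by rewrite (bigD1 k) // !rmorphM (int_minpoly_root (hg k)) !mulr0 /= mul0r.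
apply: big1 => j ji; have r2 : r j * r j = 1.
  by rewrite -expr2 -real_normK ?num_real // hR 1?eq_sym // expr1n.
have := congr1 (zeval (pi i)) (huv j).
rewrite zevalC rmorphD !rmorphM (int_minpoly_root (hg i)) mulr0 add0r => <-.
by rewrite zevalC -intrM r2.
Qed.

(* Converse: with the idempotents e_i = E_i(pi), an integral b with
   b_i = P_i(a_i, conj a_i) is (sum_i E_i(X + Y) P_i(X, Y)) at (a, conj a). *)
Lemma weil_prod_of_components :
    (forall i, weil_gen (c i) (a i)) ->
    (exists m : int, forall i, a i * c i (a i) = m%:~R) ->
    trace_idempotents ->
  weil_gen_prod c a.
Proof.
move=> hW hm he; split => // b; split => [hb | [P hP] k]; last first.
  by rewrite hP; apply/(proj2 ((hW k).2 _)); exists P.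
have [Pc hPc] : exists Pc : 'I_n -> {poly {poly int}},
    forall k, b k = eval2 (Pc k) (a k) (c k (a k)).
  apply: (@fin_all_exists _ (fun=> _) (fun k P => b k = eval2 P (a k) (c k (a k)))) => k.
  exact/(proj1 ((hW k).2 (b k))).
have [E hE] := fin_all_exists he.
exists (\sum_(i < n) at_sum (E i) * Pc i) => k.
rewrite eval2E rmorph_sum (bigD1 k) // big1 => [|i ik].
  by rewrite rmorphM zeval2_at_sum hE eqxx mul1r -eval2E -hPc /= addr0.
by rewrite rmorphM zeval2_at_sum hE [k == i]eq_sym (negPf ik) mul0r.
Qed.

End ProductOfCMFields.

Theorem mainTheorem4 (n : nat) (K : 'I_n -> fieldExtType rat)
    (c : forall i, {rmorphism K i -> K i})
    (hCM : forall i, CM_field (c i))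
    (a : forall i, K i) (g : 'I_n -> {poly int})
    (hg : forall i, int_minpoly (a i + c i (a i)) (g i)) :
  weil_gen_prod c a <->
  [/\ forall i, weil_gen (c i) (a i),
      exists m : int, forall i, a i * c i (a i) = m%:~R &
      forall i j, i != j -> `|resultant (g i) (g j)| = 1].
Proof.
split => [W | [hW hm hR]]; last first.
  exact: weil_prod_of_components hW hm (resultant_idempotents hg hR).
have g_monic i : g i \is monic.
  exact: int_minpoly_monic (hg i) (weil_prod_trace_integral W i).
split; [exact: weil_prod_component | by case: W |].
exact: idempotents_resultant hg g_monic (weil_prod_idempotents hCM W).
Qed.
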